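(* Consider the closed-loop system $\dot p_i=\mathrm{sat}(v_i^{\mathrm{ms}}(\mathbf p)+v_i^{\mathrm{cv}}(\mathbf p))$, $i=1,\dots,n$, defined in the context (with true masses $P_k(\mathbf p)$). Then for any initial state $\mathbf p(t_0)\in\mathbb{R}^{dn}$, the trajectory $\mathbf p(t)$ is bounded for all $t\ge t_0$.
   Context: Setting: $n\ge2$ robots in $\mathbb{R}^d$, positions $p_i\in\mathbb{R}^d$, configuration $\mathbf p=[p_1^\top,\dots,p_n^\top]^\top\in\mathbb{R}^{dn}$; fixed sample points $q_1,\dots,q_m\in\mathbb{R}^d$; constants $\beta>0$, $\sigma_1>0$, $\sigma_2>0$, $\varepsilon\in(0,1)$, $r_{\mathrm{avoid}}>0$, $v_{\max}>0$. Mass: $P_k(\mathbf p)=\frac1n\sum_{i=1}^n e^{-\beta\|q_k-p_i\|^2}$. Meanshift command: $v_i^{\mathrm{ms}}(\mathbf p)=\dfrac{\frac{\sigma_1}{m}\sum_{k=1}^m P_k(\mathbf p)^{-1}e^{-\beta\|q_k-p_i\|^2}(q_k-p_i)}{\sum_{k=1}^m P_k(\mathbf p)^{-1}e^{-\beta\|q_k-p_i\|^2}}$. Repulsive term: $\tilde v_i^{\mathrm{cv}}=\sigma_2\sum_{j\ne i,\ \|p_i-p_j\|\le r_{\mathrm{avoid}}}\frac{r_{\mathrm{avoid}}-\|p_i-p_j\|}{\|p_i-p_j\|+\varepsilon}(p_i-p_j)$. With $\varphi=\min\{\|v_i^{\mathrm{ms}}\|^2/\varepsilon,1\}$, the gain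 is $\kappa_2=\varphi$ if $(v_i^{\mathrm{ms}})^\top\tilde v_i^{\mathrm{cv}}\ge0$ and $\kappa_2=\varphi\min\{-(1-\varepsilon)\|v_i^{\mathrm{ms}}\|^2/((v_i^{\mathrm{ms}})^\top\tilde v_i^{\mathrm{cv}}),1\}$ if $(v_i^{\mathrm{ms}})^\top\tilde v_i^{\mathrm{cv}}<0$; collision-avoidance command $v_i^{\mathrm{cv}}=\kappa_2\tilde v_i^{\mathrm{cv}}$. Saturation: $\mathrm{sat}(z)=v_{\max}z/\|z\|$ if $\|z\|>v_{\max}$, and $\mathrm{sat}(z)=z$ otherwise. *)

From HB Require Import structures.
From mathcomp Require Import all_boot all_order all_algebra.
From mathcomp Require Import all_classical all_reals all_analysis.
Set Implicit Arguments. Unset Strict Implicit. Unset Printing Implicit Defensive.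
Import Order.TTheory GRing.Theory Num.Theory.
Import numFieldNormedType.Exports.
Local Open Scope ring_scope.

Section Coverage.
Variables (R : realType) (n d m : nat).

Definition dotv (u v : 'rV[R]_d) : R := \sum_(j < d) u 0 j * v 0 j.
Definition enorm (u : 'rV[R]_d) : R := Num.sqrt (dotv u u).

Variables (q : 'I_m -> 'rV[R]_d) (beta sigma1 sigma2 eps ravoid vmax : R).

Definition wgt (p : 'I_n -> 'rV[R]_d) (k : 'I_m) (i : 'I_n) : R :=
  expR (- beta * dotv (q k - p i) (q k - p i)).

Definition mass (p : 'I_n -> 'rV[R]_d) (k : 'I_m) : R :=
  n%:R^-1 * \sum_(i < n) wgt p k i.

Definition vms (p : 'I_n -> 'rV[R]_d) (i : 'I_n) : 'rV[R]_d :=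
  (\sum_(k < m) (mass p k)^-1 * wgt p k i)^-1 *:
  ((sigma1 / m%:R) *: \sum_(k < m) ((mass p k)^-1 * wgt p k i) *: (q k - p i)).

Definition vcv_tilde (p : 'I_n -> 'rV[R]_d) (i : 'I_n) : 'rV[R]_d :=
  sigma2 *: \sum_(j < n | (j != i) && (enorm (p i - p j) <= ravoid))
     ((ravoid - enorm (p i - p j)) / (enorm (p i - p j) + eps)) *: (p i - p j).

Definition kappa2 (p : 'I_n -> 'rV[R]_d) (i : 'I_n) : R :=
  let a := vms p i in
  let b := vcv_tilde p i in
  let phi := Num.min (dotv a a / eps) 1 in
  if 0 <= dotv a b then phi
  else phi * Num.min (- (1 - eps) * dotv a a / dotv a b) 1.

Definition vcv (p : 'I_n -> 'rV[R]_d) (i : 'I_n) : 'rV[R]_d :=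
  kappa2 p i *: vcv_tilde p i.

Definition sat (z : 'rV[R]_d) : 'rV[R]_d :=
  if vmax < enorm z then (vmax / enorm z) *: z else z.

Definition field (p : 'I_n -> 'rV[R]_d) (i : 'I_n) : 'rV[R]_d :=
  sat (vms p i + vcv p i).

End Coverage.

(* Write the meanshift command as v_i = s (c_i - p_i) with s = sigma1 / m, where
   c_i is a positively weighted mean of the sample points and hence bounded; the
   repulsive term is bounded too, and the gain kappa2 in [0, 1] is designed so
   that eps |v_i|^2 <= <v_i, v_i + kappa2 vcv_tilde_i>.  As p_i = c_i - v_i / s,
   this coercivity yields <p_i, v_i + v_i^cv> <= K - (eps s / 4) |p_i|^2 for a
   constant K, so the command, and its saturation (a positive rescaling), points
   inwards once |p_i|^2 exceeds some level r.  Therefore |p_i|^2 never exceeds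
   max(r, sum_i |p_i(t0)|^2). *)

From Pilot Require Import Defs.
From HB Require Import structures.
From mathcomp Require Import all_boot all_order all_algebra.
From mathcomp Require Import all_classical all_reals all_analysis.
From mathcomp Require Import lra ring.
Import Order.TTheory GRing.Theory Num.Theory.
Import numFieldNormedType.Exports.
Local Open Scope classical_set_scope.
Local Open Scope ring_scope.

Section InnerProduct.
Context {R : realType} {d : nat}.
Implicit Types (u v w : 'rV[R]_d) (a : R).

Lemma dotvC u v : dotv u v = dotv v u.
Proof. by apply: eq_bigr => j _; rewrite mulrC. Qed.

Lemma dotvDr u v w : dotv u (v + w) = dotv u v + dotv u w.
Proof. by rewrite /dotv -big_split; apply: eq_bigr => j _; rewrite !mxE mulrDr. Qed.

Lemma dotvZr a u v : dotv u (a *: v) = a * dotv u v.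
Proof. by rewrite /dotv mulr_sumr; apply: eq_bigr => j _; rewrite !mxE mulrCA. Qed.

Lemma dotvNr u v : dotv u (- v) = - dotv u v.
Proof. by rewrite -scaleN1r dotvZr mulN1r. Qed.

Lemma dotvBr u v w : dotv u (v - w) = dotv u v - dotv u w.
Proof. by rewrite dotvDr dotvNr. Qed.

Lemma dotvDl u v w : dotv (v + w) u = dotv v u + dotv w u.
Proof. by rewrite dotvC dotvDr !(dotvC u). Qed.

Lemma dotvZl a u v : dotv (a *: v) u = a * dotv v u.
Proof. by rewrite dotvC dotvZr dotvC. Qed.

Lemma dotvBl u v w : dotv (v - w) u = dotv v u - dotv w u.
Proof. by rewrite dotvC dotvBr !(dotvC u). Qed.

Lemma dotv_ge0 u : 0 <= dotv u u.
Proof. by apply: sumr_ge0 => j _; rewrite -expr2 sqr_ge0. Qed.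

Lemma dotv_young u v a : 0 < a -> 2 * dotv u v <= a * dotv u u + a^-1 * dotv v v.
Proof.
move=> a_gt0; rewrite -subr_ge0 -(pmulr_rge0 _ a_gt0).
have := dotv_ge0 (a *: u - v).
rewrite !(dotvBl, dotvBr, dotvZl, dotvZr) (dotvC v u).
by rewrite mulrBr !mulrDr mulVKf ?gt_eqF //; lra.
Qed.

Lemma dotvDD_le u v : dotv (u + v) (u + v) <= 2 * dotv u u + 2 * dotv v v.
Proof.
have := @dotv_young u v 1 ltr01; rewrite invr1 !mul1r !(dotvDl, dotvDr) (dotvC v u).
lra.
Qed.

Lemma normr_coord_le_enorm u (j : 'I_d) : `|u 0 j| <= enorm u.
Proof.
rewrite /enorm -sqrtr_sqr ler_sqrt ?dotv_ge0 // /dotv (bigD1 j) //= -expr2 lerDl.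
by apply: sumr_ge0 => k _; rewrite -expr2 sqr_ge0.
Qed.

Lemma dotv_le_sum_sqr u (D : 'I_d -> R) :
  (forall j, `|u 0 j| <= D j) -> dotv u u <= \sum_j D j ^+ 2.
Proof.
move=> uD; apply: ler_sum => j _; rewrite -expr2 -real_normK ?num_real //.
by rewrite lerXn2r ?nnegrE ?(le_trans _ (uD j)).
Qed.

Lemma dotv_inward {v b c p : 'rV[R]_d} {s e k Q B : R} :
  0 < s -> 0 < e -> 0 <= k <= 1 -> v = s *: (c - p) ->
  e * dotv v v <= dotv v (v + k *: b) -> dotv c c <= Q -> dotv b b <= B ->
  dotv p (v + k *: b) <= (e * s * Q + s / e * Q + Q + B) / 2 - e * s / 4 * dotv p p.
Proof.
move=> s_gt0 e_gt0 /andP[k_ge0 k_le1] vE coercive cQ bB.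
set z := v + k *: b; set W := dotv (c - p) (c - p).
have pE : p = c - s^-1 *: v.
  by rewrite vE scalerA mulVf ?gt_eqF // scale1r opprB addrC subrK.
have vv : dotv v v = s ^+ 2 * W by rewrite vE dotvZl dotvZr mulrA expr2.
have cv := @dotv_young c v _ (divr_gt0 s_gt0 e_gt0).
rewrite invf_div vv in cv.
have cb := @dotv_young c (k *: b) _ ltr01.
rewrite invr1 !mul1r dotvZr dotvZl dotvZr in cb.
have kkb : k * (k * dotv b b) <= dotv b b.
  by rewrite mulrA ler_piMl ?dotv_ge0 // mulr_ile1.
have pW : dotv p p <= 2 * W + 2 * dotv c c.
  by have := dotvDD_le (p - c) c; rewrite subrK -opprB dotvNr dotvC dotvNr opprK.
have vz : e * s * W <= s^-1 * dotv v z.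
  rewrite -(ler_pM2l s_gt0) mulVKf ?gt_eqF //.
  apply: le_trans coercive; rewrite vv.
  by have -> : e * (s ^+ 2 * W) = s * (e * s * W) by ring.
have es_gt0 : 0 < e * s by rewrite mulr_gt0.
have sQ : s / e * dotv c c <= s / e * Q by rewrite ler_wpM2l // ltW // divr_gt0.
have eQ : e * s * dotv c c <= e * s * Q by rewrite ler_wpM2l // ltW.
have epW : e * s * dotv p p <= e * s * (2 * W + 2 * dotv c c) by rewrite ler_wpM2l // ltW.
have vW : e / s * (s ^+ 2 * W) = e * s * W by field; rewrite gt_eqF.
rewrite vW in cv.
have cz : dotv c z = dotv c v + k * dotv c b by rewrite dotvDr dotvZr.
rewrite {1}pE dotvBl dotvZl cz.
lra.
Qed.

End InnerProduct.

Lemma sumr_gt0_witness {R : numDomainType} {I : finType} (i : I) (F : I -> R) :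
  (forall j, 0 < F j) -> 0 < \sum_j F j.
Proof.
move=> F_gt0; rewrite (bigD1 i) //= ltr_pwDl //.
by apply: sumr_ge0 => j _; exact: ltW.
Qed.

Lemma dotv_sat_le0 {R : realType} {d : nat} (vmax : R) (u z : 'rV[R]_d) :
  0 < vmax -> dotv u z <= 0 -> dotv u (sat vmax z) <= 0.
Proof.
move=> vmax_gt0 uz; rewrite /sat; case: ifP => // _.
by rewrite dotvZr mulr_ge0_le0 // divr_ge0 ?sqrtr_ge0 ?ltW.
Qed.

Lemma min_unit_itv {R : realDomainType} {x : R} :
  0 <= x -> 0 <= Num.min x 1 <= 1.
Proof. by move=> x_ge0; rewrite le_min x_ge0 ler01 ge_min lexx orbT. Qed.

(* the second factor of kappa2 caps the repulsion so that it removes at most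
   the fraction 1 - eps of |v|^2 *)
Lemma gain_spec {R : realFieldType} (a c phi eps : R) :
  0 <= a -> 0 < eps -> eps < 1 -> 0 <= phi <= 1 ->
  let g := if 0 <= c then phi else phi * Num.min (- (1 - eps) * a / c) 1 in
  [/\ 0 <= g, g <= 1 & eps * a <= a + g * c].
Proof.
move=> a_ge0 eps_gt0 eps_lt1 /andP[phi_ge0 phi_le1] g; rewrite /g.
case: ifPn => [c_ge0 | ]; first by split => //; nra.
rewrite -ltNge => c_lt0.
set X := - (1 - eps) * a / c.
have X_ge0 : 0 <= X.
  rewrite /X mulr_le0 ?invr_le0 ?(ltW c_lt0) //.
  by rewrite mulNr oppr_le0 mulr_ge0 // subr_ge0 ltW.
have Xc : X * c = - (1 - eps) * a by rewrite /X divfK ?lt_eqF.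
have /andP[mu_ge0 mu_le1] := min_unit_itv X_ge0.
set mu := Num.min X 1.
have muX : mu <= X by rewrite ge_min lexx.
have Xc_le : X * c <= mu * c := ler_wnM2r (ltW c_lt0) muX.
have muc_le : mu * c <= phi * mu * c.
  by rewrite -mulrA -[leLHS]mul1r ler_wnM2r ?mulr_ge0_le0 ?(ltW c_lt0).
split; [exact: mulr_ge0 | by rewrite mulr_ile1 | lra].
Qed.

Section ClosedLoop.
Context {R : realType} {n d m : nat} (q : 'I_m -> 'rV[R]_d).
Context (beta sigma1 sigma2 eps ravoid vmax : R).
Hypotheses (n_gt0 : (0 < n)%N) (m_gt0 : (0 < m)%N).
Hypotheses (sigma1_gt0 : 0 < sigma1) (sigma2_gt0 : 0 < sigma2).
Hypotheses (eps_gt0 : 0 < eps) (eps_lt1 : eps < 1) (ravoid_gt0 : 0 < ravoid).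
Hypothesis vmax_gt0 : 0 < vmax.
Implicit Types (p : 'I_n -> 'rV[R]_d) (i : 'I_n) (k : 'I_m).

Local Notation mass := (mass q beta).
Local Notation vms := (vms q beta sigma1).
Local Notation vcv_tilde := (vcv_tilde sigma2 eps ravoid).
Local Notation kappa2 := (kappa2 q beta sigma1 sigma2 eps ravoid).

Definition ms_weight p i k : R := (mass p k)^-1 * wgt q beta p k i.

Definition ms_center p i : 'rV[R]_d :=
  (\sum_k ms_weight p i k)^-1 *: \sum_k ms_weight p i k *: q k.

Lemma mass_gt0 p k : 0 < mass p k.
Proof.
rewrite mulr_gt0 ?invr_gt0 ?ltr0n //.
by apply: (sumr_gt0_witness (Ordinal n_gt0) (wgt q beta p k)) => i; exact: expR_gt0.
Qed.

Lemma ms_weight_gt0 p i k : 0 < ms_weight p i k.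
Proof. by rewrite mulr_gt0 ?expR_gt0 // invr_gt0 mass_gt0. Qed.

Lemma sum_ms_weight_gt0 p i : 0 < \sum_k ms_weight p i k.
Proof. exact: (sumr_gt0_witness (Ordinal m_gt0) _ (ms_weight_gt0 p i)). Qed.

Lemma vmsE p i : vms p i = (sigma1 / m%:R) *: (ms_center p i - p i).
Proof.
have W_neq0 := lt0r_neq0 (sum_ms_weight_gt0 p i).
change (vms p i) with ((\sum_k ms_weight p i k)^-1 *:
  ((sigma1 / m%:R) *: \sum_k ms_weight p i k *: (q k - p i))).
have -> : \sum_k ms_weight p i k *: (q k - p i) =
    \sum_k ms_weight p i k *: q k - (\sum_k ms_weight p i k) *: p i.
  by rewrite scaler_suml -sumrB; apply: eq_bigr => k _; exact: scalerBr.
rewrite /ms_center !scalerBr !scalerA; congr (_ *: _ - _); first exact: mulrC.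
by rewrite mulrAC mulVf // mul1r.
Qed.

Lemma normr_ms_center_le p i (j : 'I_d) :
  `|ms_center p i 0 j| <= \sum_k `|q k 0 j|.
Proof.
have W_gt0 := sum_ms_weight_gt0 p i.
rewrite /ms_center mxE summxE normrM ger0_norm ?invr_ge0 ?(ltW W_gt0) //.
rewrite ler_pdivrMl // mulr_suml (le_trans (ler_norm_sum _ _ _)) //.
apply: ler_sum => k _; have w_ge0 := ltW (ms_weight_gt0 p i k).
rewrite mxE normrM ger0_norm // ler_wpM2l //.
by rewrite (bigD1 k) //= lerDl sumr_ge0.
Qed.

(* each active neighbour contributes at most ravoid per coordinate *)
Lemma normr_vcv_tilde_le p i (l : 'I_d) :
  `|vcv_tilde p i 0 l| <= sigma2 * (n%:R * ravoid).
Proof.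
have sigma2_ge0 := ltW sigma2_gt0.
rewrite /Defs.vcv_tilde mxE summxE normrM ger0_norm // ler_wpM2l //.
rewrite (le_trans (ler_norm_sum _ _ _)) // big_mkcond /=.
have -> : n%:R * ravoid = \sum_(j < n) ravoid by rewrite sumr_const card_ord mulr_natl.
apply: ler_sum => j _.
case: ifP => [/andP[_ near_j] | _]; last exact: ltW.
set r := enorm (p i - p j).
have r_ge0 : 0 <= r by exact: sqrtr_ge0.
have g_ge0 : 0 <= (ravoid - r) / (r + eps).
  by rewrite divr_ge0 ?subr_ge0 ?addr_ge0 ?(ltW eps_gt0).
rewrite mxE normrM ger0_norm //.
apply: le_trans (ler_wpM2l g_ge0 (normr_coord_le_enorm _ l)) _.
rewrite mulrAC ler_pdivrMr ?ltr_wpDl // -/r mulrBl mulrDr.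
have := mulr_ge0 r_ge0 r_ge0; have := mulr_gt0 ravoid_gt0 eps_gt0; lra.
Qed.

Lemma kappa2_spec p i :
  let v := vms p i in let b := vcv_tilde p i in
  [/\ 0 <= kappa2 p i, kappa2 p i <= 1 &
      eps * dotv v v <= dotv v (v + kappa2 p i *: b)].
Proof.
move=> v b; rewrite dotvDr dotvZr.
exact: (@gain_spec _ _ (dotv v b) _ _ (dotv_ge0 v) eps_gt0 eps_lt1
  (min_unit_itv (divr_ge0 (dotv_ge0 v) (ltW eps_gt0)))).
Qed.

Lemma field_inward : exists r, forall p i, r <= dotv (p i) (p i) ->
  dotv (p i) (field q beta sigma1 sigma2 eps ravoid vmax p i) <= 0.
Proof.
pose s := sigma1 / m%:R.
have s_gt0 : 0 < s by rewrite divr_gt0 ?ltr0n.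
pose Q := \sum_j (\sum_k `|q k 0 j|) ^+ 2.
pose B := \sum_(l < d) (sigma2 * (n%:R * ravoid)) ^+ 2.
pose K := (eps * s * Q + s / eps * Q + Q + B) / 2.
have es_gt0 : 0 < eps * s by rewrite mulr_gt0.
exists (4 / (eps * s) * K) => p i far.
apply: dotv_sat_le0 => //; rewrite /Defs.vcv.
have [k_ge0 k_le1 coercive] := kappa2_spec p i.
apply: le_trans (dotv_inward s_gt0 eps_gt0 _ (vmsE p i) coercive _ _) _.
- by rewrite k_ge0 k_le1.
- exact: dotv_le_sum_sqr (normr_ms_center_le p i).
- exact: dotv_le_sum_sqr (normr_vcv_tilde_le p i).
have es4_ge0 : 0 <= eps * s / 4 by rewrite divr_ge0 ?ltW.
rewrite subr_le0 -/K; apply: le_trans (ler_wpM2l es4_ge0 far).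
by have -> : eps * s / 4 * (4 / (eps * s) * K) = K by field; rewrite !gt_eqF.
Qed.
End ClosedLoop.

Section Barrier.
Context {R : realType}.
Implicit Types (f df : R -> R) (A S : set R) (C : R).

Lemma within_continuous_closure_le f A S C x :
  {within A, continuous f} -> A x -> S `<=` A `&` [set t | f t <= C] ->
  closure S x -> f x <= C.
Proof.
move=> fc Ax SA clSx; rewrite leNgt; apply/negP => Cfx.
have fCnear : within A (nbhs x) [set t | C < f t].
  by rewrite nbhs_subspace_in //; exact: (fc x _ (lt_nbhsr Cfx)).
have [t [St tC]] := clSx _ fCnear.
by have [At /= ftC] := SA t St; move: (tC At); rewrite /= ltNge ftC.
Qed.

Lemma sublevel_invariant f df t0 C :
  {within `[t0, +oo[, continuous f} ->
  (forall t, t0 < t -> is_derive t 1 f (df t)) ->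
  (forall t, t0 < t -> C <= f t -> df t <= 0) ->
  f t0 <= C -> forall t, t0 <= t -> f t <= C.
Proof.
move=> fc fd df_le0 ft0 t1 t01; rewrite leNgt; apply/negP => Cft1.
pose S := [set t | t0 <= t <= t1 /\ f t <= C].
have S_t0 : S t0 by rewrite /S /= lexx t01.
have S_ub : ubound S t1 by move=> t [/andP[]].
pose s := sup S.
have S_le_s t : S t -> t <= s.
  by move=> St; apply: sup_upper_bound => //; split; [exists t0 | exists t1].
have t0s : t0 <= s := S_le_s t0 S_t0.
have fs : f s <= C.
  apply: (@within_continuous_closure_le f _ S C s fc); first by rewrite /= in_itv /= t0s.
    by move=> t [/andP[t0t _] ftC]; split; rewrite //= in_itv /= t0t.
  by apply: closure_sup; [exists t0 | exists t1].
have st1 : s < t1.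
  rewrite lt_neqAle ge_sup ?andbT; [|by exists t0|by []].
  by apply: contraTneq Cft1 => <-; rewrite -leNgt.
have above x : s < x -> x <= t1 -> C < f x.
  move=> sx xt1; have t0x := le_trans t0s (ltW sx).
  rewrite ltNge; apply: contraTN sx => fxC; rewrite -leNgt.
  by apply: S_le_s; split; rewrite // t0x xt1.
have [c /andP[sc ct1] fE] : exists2 c, c \in `]s, t1[ & f t1 - f s = df c * (t1 - s).
  apply: MVT => // [x /andP[sx _]|]; first by apply: fd; exact: le_lt_trans sx.
  apply: continuous_subspaceW fc => x /=; rewrite !in_itv /= => /andP[sx _].
  by rewrite (le_trans t0s).
have : df c * (t1 - s) <= 0.
  rewrite mulr_le0_ge0 ?subr_ge0 ?(ltW st1) // df_le0 ?(le_lt_trans t0s) //.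
  by rewrite ltW // above // ltW.
lra.
Qed.
End Barrier.

Section SquaredNorm.
Context {R : realType} {d : nat}.
Variable u : R -> 'rV[R]_d.

Lemma within_continuous_dotv (A : set R) :
  (forall j, {within A, continuous (fun t => u t 0 j)}) ->
  {within A, continuous (fun t => dotv (u t) (u t))}.
Proof.
move=> uc x; apply: (cvg_big add_continuous) => j _.
exact: cvgM (uc j x) (uc j x).
Qed.

Lemma is_derive_dotv (t : R) (du : 'rV[R]_d) :
  (forall j, is_derive t 1 (fun s => u s 0 j) (du 0 j)) ->
  is_derive t 1 (fun s => dotv (u s) (u s)) (2 * dotv (u t) du).
Proof.
move=> ud.
have -> : (fun s => dotv (u s) (u s)) = \sum_j ((fun s => u s 0 j) * (fun s => u s 0 j)).
  by apply/funext => s; rewrite fct_sumE.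
apply: is_derive_eq; rewrite /dotv mulr_sumr; apply: eq_bigr => j _.
by rewrite mulr2n mulrDl mul1r.
Qed.
End SquaredNorm.

Theorem lemma4 (R : realType) (n d m : nat) (q : 'I_m -> 'rV[R]_d)
  (beta sigma1 sigma2 eps ravoid vmax : R) :
  (2 <= n)%N -> (0 < m)%N ->
  0 < beta -> 0 < sigma1 -> 0 < sigma2 -> 0 < eps -> eps < 1 ->
  0 < ravoid -> 0 < vmax ->
  forall (t0 : R) (p : R -> 'I_n -> 'rV[R]_d),
  (forall (i : 'I_n) (j : 'I_d),
     {within `[t0, +oo[, continuous (fun t => p t i 0 j)}) ->
  (forall t : R, t0 < t -> forall (i : 'I_n) (j : 'I_d),
     is_derive t 1 (fun s => p s i 0 j)
       (field q beta sigma1 sigma2 eps ravoid vmax (p t) i 0 j)) ->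
  exists M : R, forall t : R, t0 <= t -> forall i : 'I_n, enorm (p t i) <= M.
Proof.
(* the kernel weights are positive for every beta *)
move=> n_ge2 m_gt0 _ sigma1_gt0 sigma2_gt0 eps_gt0 eps_lt1 ravoid_gt0 vmax_gt0
  t0 p p_cont p_deriv.
have [r inward] := field_inward q beta sigma1 sigma2 eps ravoid vmax (ltnW n_ge2)
  m_gt0 sigma1_gt0 sigma2_gt0 eps_gt0 eps_lt1 ravoid_gt0 vmax_gt0.
pose C := Num.max r (\sum_i dotv (p t0 i) (p t0 i)).
have C_ge0 : 0 <= C by rewrite le_max sumr_ge0 ?orbT // => j _; exact: dotv_ge0.
exists (Num.sqrt C) => t t0t i; rewrite ler_sqrt //.
pose v s := field q beta sigma1 sigma2 eps ravoid vmax (p s) i.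
apply: (sublevel_invariant (fun s => dotv (p s i) (p s i))
  (fun s => 2 * dotv (p s i) (v s)) t0 C _ _ _ _ t t0t).
- exact: within_continuous_dotv.
- by move=> s t0s; apply: is_derive_dotv => j; exact: p_deriv.
- move=> s _ Cs; rewrite pmulr_rle0 //; apply: inward.
  by apply: le_trans Cs; rewrite le_max lexx.
- rewrite le_max (bigD1 i) //= lerDl sumr_ge0 ?orbT // => j _.
  exact: dotv_ge0.
Qed.
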